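(* Suppose we are given two triples of real numbers $(x,y,z)$ and $(\tilde x,\tilde y,\tilde z)$ satisfying: (i) $x,\tilde x\in(-1,0)$ and $p_{0,-1}(\tilde x)>p_{0,-1}(x)$; (ii) $y\in(0,-x)$, $\tilde y\in(0,-\tilde x)$ and $p_{\tilde x,1}(\tilde y)\ge p_{x,1}(y)+\big(p_{0,-1}(\tilde x)-p_{0,-1}(x)\big)$; (iii) $0\le z<y$, $\tilde z\in(-\tilde y,\tilde y)$ and $$p_{\tilde y,\tilde x}(\tilde z)\ge p_{y,x}(z)+\big(p_{0,-\tilde x}(\tilde y)-p_{0,-x}(y)\big)+\ln\frac{\tilde y-\tilde x}{y-x}-\Big(\big(p_{\tilde x,1}(\tilde y)-p_{x,1}(y)\big)-\big(p_{0,-1}(\tilde x)-p_{0,-1}(x)\big)\Big).$$ Then $p_{\tilde y,-\tilde y}(\tilde z)>p_{y,-y}(z)$.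
   Context: Poincaré coordinates: for real $p\neq q$ and $w$ strictly between $p$ and $q$ (the oriented open interval $(p,q)$, where $p>q$ is allowed), $p_{p,q}(w)=\ln\frac{w-p}{q-w}$. *)

From Stdlib Require Import Reals.
Open Scope R_scope.

Definition pc (p q w : R) : R := ln ((w - p) / (q - w)).

From Stdlib Require Import Reals Lra.
Open Scope R_scope.

(* Put a = -x, b = -x~, t = y~, w = z~.  Exponentiating, the conclusion becomes
   w y < t z, (i) becomes a < b, and (ii), (iii) become polynomial inequalities.
   Hypothesis (iii) bounds w through (t - w) (z + a) y rho >= (w + b) (y - z) t sigma,
   so it suffices that the linear function
     f z = sigma (b y + t z) - y (z + a) rho
   is positive on [0, y).  By linearity this reduces to f 0 > 0 and f y >= 0, and
   each of these follows from (ii) through an identity expressing it as a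
   nonnegative multiple of the slack of (ii) plus a manifestly nonnegative term. *)

Section Core.

Variables a b y t : R.
Hypotheses (Hy : 0 < y) (Hya : y < a) (Hab : a < b) (Hb : b < 1)
  (Ht : 0 < t) (Htb : t < b).
Hypothesis Hii :
  (y + a) * (1 - t) * b * (1 - a) <= (t + b) * (1 - y) * (1 - b) * a.

Let rho := (b - t) * (1 - y) * (1 - b) * a.
Let sigma := (a - y) * (1 - t) * b * (1 - a).
Let slack := (t + b) * (1 - y) * (1 - b) * a - (y + a) * (1 - t) * b * (1 - a).

Let rho_pos : 0 < rho.
Proof. unfold rho; repeat apply Rmult_lt_0_compat; lra. Qed.

Let sigma_pos : 0 < sigma.
Proof. unfold sigma; repeat apply Rmult_lt_0_compat; lra. Qed.

Let slack_nonneg : 0 <= slack.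
Proof. unfold slack; lra. Qed.

Let growth_gap : 0 < 1 + a + b - a * b.
Proof. assert (0 < a * (1 - b)) by (apply Rmult_lt_0_compat; lra). lra. Qed.

Lemma linear_bound_at_0 : a * rho < b * sigma.
Proof.
assert (Hid : (1 + a) * (b * sigma - a * rho) =
  b * (1 - a) * slack + a * (1 - y) * (b - t) * (b - a) * (1 + a + b - a * b))
  by (unfold slack, sigma, rho; ring).
assert (0 <= b * (1 - a) * slack) by (apply Rmult_le_pos; [apply Rmult_le_pos|]; lra).
assert (0 < a * (1 - y) * (b - t) * (b - a) * (1 + a + b - a * b))
  by (repeat apply Rmult_lt_0_compat; lra).
apply Rlt_0_minus, (Rmult_lt_reg_l (1 + a)); lra.
Qed.

Lemma linear_bound_at_y : (y + a) * rho <= (t + b) * sigma.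
Proof.
set (alpha := a * (1 - b) * (1 - y) + b * (1 - a) * (y + a)).
assert (Hid : alpha * (1 + a) * ((t + b) * sigma - (y + a) * rho) =
  ((a - y) * b * (1 - a) * (1 + a) * (b - t) + 2 * alpha * b * (1 - a)) * slack
  + a * (1 - y) * (y + a) * (b - a)
    * ((1 - a) * (1 + b) * (1 + a + b - a * b) + (1 - b) * (1 + a) * (a - y))
    * (b - t))
  by (unfold slack, alpha, sigma, rho; ring).
assert (Halpha : 0 < alpha).
{ unfold alpha; apply Rplus_lt_0_compat; repeat apply Rmult_lt_0_compat; lra. }
assert (0 <= (a - y) * b * (1 - a) * (1 + a) * (b - t) + 2 * alpha * b * (1 - a)).
{ apply Rplus_le_le_0_compat; repeat apply Rmult_le_pos; lra. }
assert (0 <= a * (1 - y) * (y + a) * (b - a)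
    * ((1 - a) * (1 + b) * (1 + a + b - a * b) + (1 - b) * (1 + a) * (a - y))
    * (b - t)).
{ assert (0 <= (1 - b) * (1 + a) * (a - y)) by (repeat apply Rmult_le_pos; lra).
  assert (0 < (1 - a) * (1 + b) * (1 + a + b - a * b))
    by (repeat apply Rmult_lt_0_compat; lra).
  repeat apply Rmult_le_pos; lra. }
assert (0 <= alpha * (1 + a) * ((t + b) * sigma - (y + a) * rho)).
{ rewrite Hid; apply Rplus_le_le_0_compat; [apply Rmult_le_pos|]; assumption. }
assert (0 < alpha * (1 + a)) by (apply Rmult_lt_0_compat; lra).
apply Rge_le, Rminus_ge, Rle_ge, (Rmult_le_reg_l (alpha * (1 + a))); lra.
Qed.

Lemma linear_bound (z : R) :
  0 <= z < y -> y * (z + a) * rho < sigma * (b * y + t * z).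
Proof.
intros [Hz0 Hzy].
assert (Hid : sigma * (b * y + t * z) - y * (z + a) * rho =
  (y - z) * (b * sigma - a * rho) + z * ((t + b) * sigma - (y + a) * rho)) by ring.
assert (0 < (y - z) * (b * sigma - a * rho)).
{ pose proof linear_bound_at_0. apply Rmult_lt_0_compat; lra. }
assert (0 <= z * ((t + b) * sigma - (y + a) * rho)).
{ pose proof linear_bound_at_y. apply Rmult_le_pos; lra. }
lra.
Qed.

Lemma cross_mult_lt (z w : R) :
  0 <= z < y ->
  (w + b) * (y - z) * t * sigma <= (t - w) * (z + a) * y * rho ->
  w * y < t * z.
Proof.
intros Hz Hiii.
pose proof (linear_bound z Hz) as Hf.
set (K := y * (z + a) * rho + (y - z) * t * sigma).
assert (Hid : (t * z - w * y) * K =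
  y * ((t - w) * (z + a) * y * rho - (w + b) * (y - z) * t * sigma)
  + (y - z) * t * (sigma * (b * y + t * z) - y * (z + a) * rho))
  by (unfold K; ring).
assert (0 < K).
{ unfold K; apply Rplus_lt_le_0_compat;
    [repeat apply Rmult_lt_0_compat | repeat apply Rmult_le_pos]; lra. }
assert (0 < (t * z - w * y) * K).
{ rewrite Hid; apply Rplus_le_lt_0_compat;
    [apply Rmult_le_pos | repeat apply Rmult_lt_0_compat]; lra. }
assert (0 < t * z - w * y) by (apply (Rmult_lt_reg_r K); lra).
lra.
Qed.

End Core.

Lemma pc_ln_ratio (p q w n d : R) :
  (w - p) / (q - w) = n / d -> 0 < n -> 0 < d -> pc p q w = ln n - ln d.
Proof.
intros E Hn Hd; unfold pc; rewrite E; unfold Rdiv.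
rewrite ln_mult, ln_Rinv; [ring | assumption | assumption | now apply Rinv_0_lt_compat].
Qed.

Lemma ln_le_inv (u v : R) : 0 < u -> 0 < v -> ln u <= ln v -> u <= v.
Proof.
intros Hu Hv H; destruct (Rlt_or_le v u) as [Hlt|]; [|assumption].
pose proof (ln_increasing v u Hv Hlt); lra.
Qed.

Ltac pos := repeat apply Rmult_lt_0_compat; lra.
Ltac pc_side := solve [field; repeat split; lra | lra].

Lemma pc_sym_lt (y z t w : R) :
  0 <= z < y -> - t < w < t -> w * y < t * z -> pc t (- t) w > pc y (- y) z.
Proof.
intros [Hz0 Hzy] [Hw0 Hwt] Hcross.
rewrite (pc_ln_ratio t (- t) w (t - w) (t + w)), (pc_ln_ratio y (- y) z (y - z) (y + z))
  by pc_side.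
assert (Hlt : (y - z) * (t + w) < (t - w) * (y + z)) by lra.
assert (Hpos : 0 < (y - z) * (t + w)) by (apply Rmult_lt_0_compat; lra).
pose proof (ln_increasing _ _ Hpos Hlt) as Hln.
rewrite !ln_mult in Hln by lra; lra.
Qed.

Theorem lemma4p1 (x y z xt yt zt : R) :
  (* (i) *)
  (-1 < x /\ x < 0) -> (-1 < xt /\ xt < 0) ->
  pc 0 (-1) xt > pc 0 (-1) x ->
  (* (ii) *)
  (0 < y /\ y < - x) -> (0 < yt /\ yt < - xt) ->
  pc xt 1 yt >= pc x 1 y + (pc 0 (-1) xt - pc 0 (-1) x) ->
  (* (iii) *)
  (0 <= z /\ z < y) -> (- yt < zt /\ zt < yt) ->
  pc yt xt zt >=
    pc y x z + (pc 0 (- xt) yt - pc 0 (- x) y)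
    + ln ((yt - xt) / (y - x))
    - ((pc xt 1 yt - pc x 1 y) - (pc 0 (-1) xt - pc 0 (-1) x)) ->
  pc yt (- yt) zt > pc y (- y) z.
Proof.
intros [Hx1 Hx2] [Hxt1 Hxt2] Hi [Hy1 Hy2] [Hyt1 Hyt2] Hii [Hz1 Hz2] [Hzt1 Hzt2] Hiii.
rewrite (pc_ln_ratio 0 (-1) xt (-xt) (1 - -xt)) in Hi, Hii, Hiii by pc_side.
rewrite (pc_ln_ratio 0 (-1) x (-x) (1 - -x)) in Hi, Hii, Hiii by pc_side.
rewrite (pc_ln_ratio xt 1 yt (yt + -xt) (1 - yt)) in Hii, Hiii by pc_side.
rewrite (pc_ln_ratio x 1 y (y + -x) (1 - y)) in Hii, Hiii by pc_side.
rewrite (pc_ln_ratio 0 (-xt) yt yt (-xt - yt)) in Hiii by pc_side.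
rewrite (pc_ln_ratio 0 (-x) y y (-x - y)) in Hiii by pc_side.
rewrite (pc_ln_ratio yt xt zt (yt - zt) (zt + -xt)) in Hiii by pc_side.
rewrite (pc_ln_ratio y x z (y - z) (z + -x)) in Hiii by pc_side.
replace ((yt - xt) / (y - x)) with ((yt + -xt) / (y + -x)) in Hiii by pc_side.
unfold Rdiv in Hiii; rewrite ln_mult, ln_Rinv in Hiii by (try apply Rinv_0_lt_compat; lra).
assert (Hab : -x < -xt).
{ assert ((-x) * (1 - -xt) < (-xt) * (1 - -x)).
  { apply ln_lt_inv; try pos. rewrite !ln_mult by lra. lra. }
  lra. }
assert (Hii' : (y + -x) * (1 - yt) * (-xt) * (1 - -x)
    <= (yt + -xt) * (1 - y) * (1 - -xt) * (-x)).
{ apply ln_le_inv; try pos. rewrite !ln_mult by pos. lra. }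
assert (Hiii' : (zt + -xt) * (y - z) * yt * ((-x - y) * (1 - yt) * (-xt) * (1 - -x))
    <= (yt - zt) * (z + -x) * y * ((-xt - yt) * (1 - y) * (1 - -xt) * (-x))).
{ apply ln_le_inv; try pos. rewrite !ln_mult by pos. lra. }
apply pc_sym_lt; [lra | lra |].
apply (cross_mult_lt (-x) (-xt) y yt); lra.
Qed.
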